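(* For every general channel $\mathbf W$ and every real $R$, \[ C_p(R\mid\mathbf W)=\inf_{\mathbf P}\lim_{\gamma\downarrow0}I_p(R-\gamma\mid\mathbf P,\mathbf W)=\inf_{\mathbf P}\sup_{\mathbf Q}\lim_{\gamma\downarrow0}J_p(R-\gamma\mid\mathbf P,\mathbf Q,\mathbf W), \] and for every $0\le\epsilon<1$, \[ C(\epsilon\mid\mathbf W)=\sup_{\mathbf P}I(\epsilon\mid\mathbf P,\mathbf W)=\sup_{\mathbf P}\inf_{\mathbf Q}J(\epsilon\mid\mathbf P,\mathbf Q,\mathbf W). \]
   Context: A general channel $\mathbf W=\{W^n\}_{n\ge1}$ consists of finite (or countable) input sets $\mathcal X_n$, output sets $\mathcal Y_n$ and conditional distributions $W^n_x=W^n(\cdot|x)$ on $\mathcal Y_n$, $x\in\mathcal X_n$. $\mathbf P=\{P^n\}$ ranges over sequences of distributions on $\mathcal X_n$, $\mathbf Q=\{Q^n\}$ over sequences of distributions on $\mathcal Y_n$; $W^n_{P^n}(y)=\sum_xP^n(x)W^n_x(y)$. Logarithms natural. Define $I_p(R|\mathbf P,\mathbf W)=\limsup_n\sum_xP^n(x)W^n_x\{y:\frac1n\log\frac{W^n_x(y)}{W^n_{P^n}(y)}<R\}$, $I(\epsilon|\mathbf P,\mathbf W)=\sup\{R: I_p(R|\mathbf P,\mathbf W)\le\epsilon\}$, $J_p(R|\mathbf P,\mathbf Q,\mathbf W)=\limsup_n\sum_xP^n(x)W^n_x\{y:\frac1n\log\frac{W^n_x(y)}{Q^n(y)}<R\}$,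 $J(\epsilon|\mathbf P,\mathbf Q,\mathbf W)=\sup\{R:J_p(R|\mathbf P,\mathbf Q,\mathbf W)\le\epsilon\}$. A code for $W^n$ is $\Phi=(N,\phi,\{\mathcal D_i\}_{i=1}^N)$, $\phi:\{1..N\}\to\mathcal X_n$, pairwise disjoint $\mathcal D_i\subset\mathcal Y_n$; $|\Phi|=N$; $P_{e,W^n}(\Phi)=\frac1N\sum_i(1-W^n_{\phi(i)}(\mathcal D_i))$. Over all code sequences $\{\Phi_n\}$: $C_p(R|\mathbf W)=\inf\{\limsup_nP_{e,W^n}(\Phi_n):\liminf_n\frac1n\log|\Phi_n|\ge R\}$, $C(\epsilon|\mathbf W)=\sup\{\liminf_n\frac1n\log|\Phi_n|:\limsup_nP_{e,W^n}(\Phi_n)\le\epsilon\}$. *)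

From Stdlib Require Import Reals Lra ClassicalEpsilon Classical.
Open Scope R_scope.

Inductive Rbar := Finite (r : R) | p_infty | m_infty.

Definition Rbar_le (x y : Rbar) : Prop :=
  match x, y with
  | m_infty, _ => True
  | _, p_infty => True
  | p_infty, _ => False
  | _, m_infty => False
  | Finite a, Finite b => a <= b
  end.

Definition Rbar_lt (x y : Rbar) : Prop := Rbar_le x y /\ x <> y.

Definition is_lub_Rbar (E : Rbar -> Prop) (l : Rbar) : Prop :=
  (forall x, E x -> Rbar_le x l) /\
  (forall b, (forall x, E x -> Rbar_le x b) -> Rbar_le l b).

Definition is_glb_Rbar (E : Rbar -> Prop) (l : Rbar) : Prop :=
  (forall x, E x -> Rbar_le l x) /\
  (forall b, (forall x, E x -> Rbar_le b x) -> Rbar_le b l).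

(* supremum / infimum of a set of extended reals (always exist; sup of the
   empty set is -oo, inf of the empty set is +oo) *)
Definition Rbar_sup (E : Rbar -> Prop) : Rbar :=
  epsilon (inhabits p_infty) (is_lub_Rbar E).
Definition Rbar_inf (E : Rbar -> Prop) : Rbar :=
  epsilon (inhabits p_infty) (is_glb_Rbar E).

Definition limsup (u : nat -> R) : Rbar :=
  Rbar_inf (fun l => exists N : nat,
    l = Rbar_sup (fun v => exists k, (N <= k)%nat /\ v = Finite (u k))).
Definition liminf (u : nat -> R) : Rbar :=
  Rbar_sup (fun l => exists N : nat,
    l = Rbar_inf (fun v => exists k, (N <= k)%nat /\ v = Finite (u k))).

Definition Rbar_nbhd (L : Rbar) (V : Rbar -> Prop) : Prop :=
  match L with
  | Finite l => exists e, 0 < e /\ forall r, Rabs (r - l) < e -> V (Finite r)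
  | p_infty => exists M, forall v, Rbar_lt (Finite M) v -> V v
  | m_infty => exists M, forall v, Rbar_lt v (Finite M) -> V v
  end.

Definition is_left_lim (f : R -> Rbar) (x : R) (L : Rbar) : Prop :=
  forall V, Rbar_nbhd L V ->
    exists d, 0 < d /\ forall g, 0 < g < d -> V (f (x - g)).

Definition Lim_left (f : R -> Rbar) (x : R) : Rbar :=
  epsilon (inhabits p_infty) (is_left_lim f x).

Definition real (x : Rbar) : R := match x with Finite r => r | _ => 0 end.

(* sum over nat of a nonnegative family (sup of partial sums); all uses below
   are of summable families bounded by 1 *)
Definition psum (f : nat -> R) : R :=
  real (Rbar_sup (fun v => exists N, v = Finite (sum_f_R0 f N))).

Definition ind (A : Prop) : R :=
  if excluded_middle_informative A then 1 else 0.

(* Index k of every sequence corresponds to block length n = k+1.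
   Countable alphabets are represented (up to relabelling) as subsets of nat. *)
Definition bl (k : nat) : R := INR (S k).

Definition is_dist (A : nat -> Prop) (p : nat -> R) : Prop :=
  (forall x, 0 <= p x) /\ (forall x, ~ A x -> p x = 0) /\ infinite_sum p 1.

Record channel := {
  inX : nat -> nat -> Prop;            (* inX k x  <->  x in X_n *)
  inY : nat -> nat -> Prop;            (* inY k y  <->  y in Y_n *)
  Wc : nat -> nat -> nat -> R;         (* Wc k x y = W^n(y|x) *)
  X_nonempty : forall k, exists x, inX k x;
  W_dist : forall k x, inX k x -> is_dist (inY k) (Wc k x)
}.

Definition input_seq (W : channel) (P : nat -> nat -> R) : Prop :=
  forall k, is_dist (inX W k) (P k).
Definition output_seq (W : channel) (Q : nat -> nat -> R) : Prop :=
  forall k, is_dist (inY W k) (Q k).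

Definition Wmeas (W : channel) (k x : nat) (A : nat -> Prop) : R :=
  psum (fun y => Wc W k x y * ind (A y)).

Definition outP (W : channel) (P : nat -> nat -> R) (k y : nat) : R :=
  psum (fun x => P k x * Wc W k x y).

(* the event (1/n) log (a / b) < R, with log 0 = -oo and a/0 = +oo for a > 0 *)
Definition dens_lt (k : nat) (a b r : R) : Prop :=
  0 < a -> (0 < b /\ ln (a / b) / bl k < r).

Definition Ip_seq (W : channel) (P : nat -> nat -> R) (r : R) (k : nat) : R :=
  psum (fun x => P k x *
    Wmeas W k x (fun y => dens_lt k (Wc W k x y) (outP W P k y) r)).

Definition I_p (W : channel) (P : nat -> nat -> R) (r : R) : Rbar :=
  limsup (Ip_seq W P r).

Definition I_eps (W : channel) (P : nat -> nat -> R) (eps : R) : Rbar :=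
  Rbar_sup (fun v => exists r, v = Finite r /\ Rbar_le (I_p W P r) (Finite eps)).

Definition Jp_seq (W : channel) (P Q : nat -> nat -> R) (r : R) (k : nat) : R :=
  psum (fun x => P k x *
    Wmeas W k x (fun y => dens_lt k (Wc W k x y) (Q k y) r)).

Definition J_p (W : channel) (P Q : nat -> nat -> R) (r : R) : Rbar :=
  limsup (Jp_seq W P Q r).

Definition J_eps (W : channel) (P Q : nat -> nat -> R) (eps : R) : Rbar :=
  Rbar_sup (fun v => exists r, v = Finite r /\ Rbar_le (J_p W P Q r) (Finite eps)).

(* messages are 0, ..., N-1 *)
Record code (W : channel) (k : nat) := {
  cN : nat;
  cphi : nat -> nat;
  cD : nat -> nat -> Prop;
  cN_pos : (1 <= cN)%nat;
  cphi_in : forall i, (i < cN)%nat -> inX W k (cphi i);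
  cD_sub : forall i y, (i < cN)%nat -> cD i y -> inY W k y;
  cD_disj : forall i j y, (i < cN)%nat -> (j < cN)%nat -> i <> j ->
              cD i y -> cD j y -> False
}.

Arguments cN {W k}.
Arguments cphi {W k}.
Arguments cD {W k}.

Definition Pe (W : channel) (k : nat) (c : code W k) : R :=
  / INR (cN c) *
  sum_f_R0 (fun i => 1 - Wmeas W k (cphi c i) (cD c i)) (pred (cN c)).

Definition rate (W : channel) (k : nat) (c : code W k) : R :=
  ln (INR (cN c)) / bl k.

Definition C_p (W : channel) (r : R) : Rbar :=
  Rbar_inf (fun v => exists Phi : forall k, code W k,
    Rbar_le (Finite r) (liminf (fun k => rate W k (Phi k))) /\
    v = limsup (fun k => Pe W k (Phi k))).

Definition C_eps (W : channel) (eps : R) : Rbar :=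
  Rbar_sup (fun v => exists Phi : forall k, code W k,
    Rbar_le (limsup (fun k => Pe W k (Phi k))) (Finite eps) /\
    v = liminf (fun k => rate W k (Phi k))).

(** Since [I_p(. | P)] is literally [J_p(. | P, W_P)], each identity follows
    from a cycle of three inequalities: the choice [Q = W_P] gives the middle
    one, and the other two are
    - achievability, from Feinstein's lemma: for every [M] there is a code
      with [M] codewords and [P_e <= I_n(r | P) + M e^{-n r}], built greedily;
      for [C_p] the threshold gaps are made to vanish along a diagonal
      sequence;
    - the converse, from the Verdú–Han lemma: a code with at least
      [e^{n (r + g)}] codewords, used with uniform inputs, satisfies
      [J_n(r | uniform codewords, Q) <= P_e + e^{-n g}] for every [Q]. *)

From Stdlib Require Import Reals ZArith Lra Lia ClassicalEpsilon Classical.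
Open Scope R_scope.

Lemma Rbar_le_trans x y z : Rbar_le x y -> Rbar_le y z -> Rbar_le x z.
Proof. destruct x, y, z; simpl; intros; auto; try lra; contradiction. Qed.

Lemma Rbar_le_antisym x y : Rbar_le x y -> Rbar_le y x -> x = y.
Proof. destruct x, y; simpl; intros; try contradiction; auto. f_equal; lra. Qed.

Lemma Rbar_not_le x y : ~ Rbar_le x y -> Rbar_le y x.
Proof. destruct x, y; simpl; intros; auto; lra. Qed.

Lemma lub_ex (E : Rbar -> Prop) : exists l, is_lub_Rbar E l.
Proof.
  destruct (classic (E p_infty)) as [Hp|Hp].
  { exists p_infty; split; [intros [] _; simpl; auto|].
    intros b Hb. apply Hb; auto. }
  destruct (classic (exists r, E (Finite r))) as [[r0 Hr0]|Hn].
  - destruct (classic (bound (fun r => E (Finite r)))) as [Hb|Hb].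
    + destruct (completeness _ Hb (ex_intro _ r0 Hr0)) as [m [Hm1 Hm2]].
      exists (Finite m); split.
      * intros [] Ex; simpl; auto.
      * intros [b| |] Hbb; simpl; auto.
        -- apply Hm2. intros x Ex. apply (Hbb (Finite x) Ex).
        -- apply (Hbb (Finite r0) Hr0).
    + exists p_infty; split; [intros [] _; simpl; auto|].
      intros [b| |] Hbb; simpl; auto.
      * apply Hb. exists b. intros x Ex. apply (Hbb (Finite x) Ex).
      * apply (Hbb (Finite r0) Hr0).
  - exists m_infty; split.
    + intros [] Ex; simpl; auto; apply Hn; eauto.
    + intros [] _; simpl; auto.
Qed.

(* The greatest lower bound of [E] is the least upper bound of its set of
   lower bounds. *)
Lemma glb_ex (E : Rbar -> Prop) : exists l, is_glb_Rbar E l.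
Proof.
  destruct (lub_ex (fun b => forall x, E x -> Rbar_le b x)) as [l [Hub Hleast]].
  exists l; split.
  - intros x Ex. apply Hleast. intros b Hb. apply Hb, Ex.
  - intros b Hb. apply Hub, Hb.
Qed.

Lemma sup_ub E x : E x -> Rbar_le x (Rbar_sup E).
Proof. apply (epsilon_spec _ _ (lub_ex E)). Qed.
Lemma sup_least E b : (forall x, E x -> Rbar_le x b) -> Rbar_le (Rbar_sup E) b.
Proof. apply (epsilon_spec _ _ (lub_ex E)). Qed.
Lemma inf_lb E x : E x -> Rbar_le (Rbar_inf E) x.
Proof. apply (epsilon_spec _ _ (glb_ex E)). Qed.
Lemma inf_greatest E b : (forall x, E x -> Rbar_le b x) -> Rbar_le b (Rbar_inf E).
Proof. apply (epsilon_spec _ _ (glb_ex E)). Qed.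

Lemma Rbar_le_eps_r x c :
  (forall d, 0 < d -> Rbar_le x (Finite (c + d))) -> Rbar_le x (Finite c).
Proof.
  intros H. destruct x as [r| |]; simpl; auto.
  - destruct (Rle_dec r c); auto.
    pose proof (H ((r - c) / 2) ltac:(lra)) as Hd; simpl in Hd; lra.
  - apply (H 1); lra.
Qed.

Lemma Rbar_le_eps_l x c :
  (forall d, 0 < d -> Rbar_le (Finite (c - d)) x) -> Rbar_le (Finite c) x.
Proof.
  intros H. destruct x as [r| |]; simpl; auto.
  - destruct (Rle_dec c r); auto.
    pose proof (H ((c - r) / 2) ltac:(lra)) as Hd; simpl in Hd; lra.
  - apply (H 1); lra.
Qed.

Lemma Rbar_le_below x y :
  (forall r, ~ Rbar_le x (Finite r) -> Rbar_le (Finite r) y) -> Rbar_le x y.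
Proof.
  intros H. destruct x as [r| |]; [| |simpl; auto].
  - apply Rbar_le_eps_l. intros d Hd. apply H. simpl. lra.
  - destruct y as [s| |]; simpl; auto.
    + pose proof (H (s + 1) ltac:(simpl; auto)) as Hs; simpl in Hs; lra.
    + apply (H 0); simpl; auto.
Qed.

Lemma Rbar_lt_witness r x :
  ~ Rbar_le x (Finite r) -> exists r', r < r' /\ Rbar_le (Finite r') x.
Proof.
  destruct x as [s| |]; simpl; intros H.
  - exists s; split; lra.
  - exists (r + 1); split; auto; lra.
  - tauto.
Qed.

Definition eventually (P : nat -> Prop) : Prop :=
  exists N, forall n, (N <= n)%nat -> P n.

Lemma eventually_and P Q :
  eventually P -> eventually Q -> eventually (fun n => P n /\ Q n).
Proof.
  intros [N1 H1] [N2 H2]. exists (max N1 N2).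
  intros n Hn. split; [apply H1|apply H2]; lia.
Qed.

Definition tail_sup (u : nat -> R) N :=
  Rbar_sup (fun v => exists k, (N <= k)%nat /\ v = Finite (u k)).
Definition tail_inf (u : nat -> R) N :=
  Rbar_inf (fun v => exists k, (N <= k)%nat /\ v = Finite (u k)).

Lemma limsup_le_eventually u c :
  Rbar_le (limsup u) (Finite c) -> forall d, 0 < d -> eventually (fun n => u n <= c + d).
Proof.
  intros H d Hd.
  destruct (classic (exists N, Rbar_le (tail_sup u N) (Finite (c + d)))) as [[N HN]|HN].
  - exists N. intros n Hn.
    assert (Hu : Rbar_le (Finite (u n)) (Finite (c + d))).
    { eapply Rbar_le_trans; [|apply HN]. apply sup_ub. eauto. }
    exact Hu.
  - exfalso.
    assert (Hc : Rbar_le (Finite (c + d)) (limsup u)).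
    { apply inf_greatest. intros x [N ->]. apply Rbar_not_le. intro; apply HN; eauto. }
    pose proof (Rbar_le_trans _ _ _ Hc H) as Hcd. simpl in Hcd. lra.
Qed.

Lemma eventually_limsup_le u c :
  (forall d, 0 < d -> eventually (fun n => u n <= c + d)) -> Rbar_le (limsup u) (Finite c).
Proof.
  intros H. apply Rbar_le_eps_r. intros d Hd. destruct (H d Hd) as [N HN].
  eapply Rbar_le_trans; [apply inf_lb; exists N; reflexivity|].
  apply sup_least. intros x [k [Hk ->]]. simpl. auto.
Qed.

Lemma liminf_ge_eventually u r :
  Rbar_le (Finite r) (liminf u) -> forall d, 0 < d -> eventually (fun n => r - d <= u n).
Proof.
  intros H d Hd.
  destruct (classic (exists N, Rbar_le (Finite (r - d)) (tail_inf u N))) as [[N HN]|HN].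
  - exists N. intros n Hn.
    assert (Hu : Rbar_le (Finite (r - d)) (Finite (u n))).
    { eapply Rbar_le_trans; [apply HN|]. apply inf_lb. eauto. }
    exact Hu.
  - exfalso.
    assert (Hc : Rbar_le (liminf u) (Finite (r - d))).
    { apply sup_least. intros x [N ->]. apply Rbar_not_le. intro; apply HN; eauto. }
    pose proof (Rbar_le_trans _ _ _ H Hc) as Hrd. simpl in Hrd. lra.
Qed.

Lemma eventually_liminf_ge u r :
  (forall d, 0 < d -> eventually (fun n => r - d <= u n)) -> Rbar_le (Finite r) (liminf u).
Proof.
  intros H. apply Rbar_le_eps_l. intros d Hd. destruct (H d Hd) as [N HN].
  eapply Rbar_le_trans; [|apply sup_ub; exists N; reflexivity].
  apply inf_greatest. intros x [k [Hk ->]]. simpl. auto.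
Qed.

Lemma limsup_unit_interval u :
  (forall k, 0 <= u k <= 1) -> exists h, limsup u = Finite h /\ 0 <= h <= 1.
Proof.
  intros H.
  assert (H0 : Rbar_le (Finite 0) (limsup u)).
  { apply inf_greatest. intros x [N ->].
    eapply Rbar_le_trans; [|apply sup_ub; exists N; split; [lia|reflexivity]].
    apply (H N). }
  assert (H1 : Rbar_le (limsup u) (Finite 1)).
  { apply eventually_limsup_le. intros d Hd. exists 0%nat. intros n _.
    pose proof (H n). lra. }
  destruct (limsup u) as [h| |]; simpl in *; try contradiction. eauto.
Qed.

Lemma limsup_le u v :
  (forall k, 0 <= v k <= 1) ->
  (forall d, 0 < d -> eventually (fun n => u n <= v n + d)) ->
  Rbar_le (limsup u) (limsup v).
Proof.
  intros Hv H. destruct (limsup_unit_interval v Hv) as [h [Eh _]]. rewrite Eh.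
  apply eventually_limsup_le. intros d Hd.
  destruct (eventually_and _ _ (H (d / 2) ltac:(lra))
              (limsup_le_eventually v h ltac:(rewrite Eh; simpl; lra) (d / 2) ltac:(lra)))
    as [N HN].
  exists N. intros n Hn. destruct (HN n Hn). lra.
Qed.

Section LeftLimit.
Variables (f : R -> Rbar) (h : R -> R) (x : R) (L : Rbar).
Hypothesis f_finite : forall s, f s = Finite (h s).
Hypothesis f_lim : is_left_lim f x L.

Lemma left_lim_le c :
  (forall g, 0 < g -> Rbar_le (f (x - g)) c) -> Rbar_le L c.
Proof.
  intros Hc. apply NNPP. intro Hn.
  destruct c as [c| |]; [|apply Hn; destruct L; simpl; auto|].
  - destruct (f_lim (fun v => Rbar_le (Finite c) v /\ v <> Finite c)) as [d [Hd Hg]].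
    + destruct L as [l| |]; simpl in Hn; [|exists c; intros v [H1 H2]; split; auto|contradiction].
      exists (l - c). split; [lra|]. intros s Hs. apply Rabs_def2 in Hs.
      split; [simpl; lra|]. intro E. injection E. lra.
    + destruct (Hg (d / 2) ltac:(lra)) as [H1 H2].
      apply H2, Rbar_le_antisym; auto. apply Hc. lra.
  - pose proof (Hc 1 ltac:(lra)) as H1. rewrite f_finite in H1. exact H1.
Qed.

Lemma left_lim_ge c d0 :
  0 < d0 -> (forall g, 0 < g < d0 -> Rbar_le c (f (x - g))) -> Rbar_le c L.
Proof.
  intros Hd0 Hc. apply NNPP. intro Hn.
  destruct c as [c| |]; [| |apply Hn; destruct L; simpl; auto].
  2: { pose proof (Hc (d0 / 2) ltac:(lra)) as H1. rewrite f_finite in H1. exact H1. }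
  destruct (f_lim (fun v => Rbar_le v (Finite c) /\ v <> Finite c)) as [d [Hd Hg]].
  - destruct L as [l| |]; simpl in Hn; [|contradiction|exists c; intros v [H1 H2]; split; auto].
    exists (c - l). split; [lra|]. intros s Hs. apply Rabs_def2 in Hs.
    split; [simpl; lra|]. intro E. injection E. lra.
  - set (g := Rmin (d / 2) (d0 / 2)).
    assert (Hg1 : g <= d / 2) by apply Rmin_l.
    assert (Hg2 : g <= d0 / 2) by apply Rmin_r.
    assert (Hg0 : 0 < g) by (unfold g; apply Rmin_case; lra).
    destruct (Hg g ltac:(lra)) as [K1 K2].
    apply K2, Rbar_le_antisym; auto. apply Hc. lra.
Qed.

End LeftLimit.

(* A nondecreasing bounded real function has a (finite) left limit, namely
   the supremum of its values to the left of [x]. *)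
Lemma left_lim_monotone (h : R -> R) x b :
  (forall s t, s <= t -> h s <= h t) -> (forall s, h s <= b) ->
  exists L, is_left_lim (fun s => Finite (h s)) x L.
Proof.
  intros Hm Hb.
  set (E := fun v => exists g, 0 < g /\ v = h (x - g)).
  assert (HB : bound E) by (exists b; intros v [g [_ ->]]; auto).
  assert (HE : exists v, E v) by (exists (h (x - 1)); exists 1; split; [lra|auto]).
  destruct (completeness E HB HE) as [l [Hl1 Hl2]].
  exists (Finite l). intros V [e [He HV]].
  assert (Hg0 : exists g0, 0 < g0 /\ l - e < h (x - g0)).
  { apply NNPP. intro Hn. assert (l <= l - e); [|lra].
    apply Hl2. intros v [g [Hg ->]]. apply Rnot_lt_le. intro. apply Hn. eauto. }
  destruct Hg0 as [g0 [Hg0 Hg0']].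
  exists g0. split; auto. intros g [Hg1 Hg2]. apply HV.
  assert (h (x - g0) <= h (x - g)) by (apply Hm; lra).
  assert (h (x - g) <= l) by (apply Hl1; exists g; split; auto).
  apply Rabs_def1; lra.
Qed.

Lemma Un_cv_const c : Un_cv (fun _ => c) c.
Proof.
  intros e He. exists 0%nat. intros. unfold Rdist.
  replace (c - c) with 0 by ring. rewrite Rabs_R0. auto.
Qed.

Lemma isum_ext f g l : (forall x, f x = g x) -> infinite_sum f l -> infinite_sum g l.
Proof.
  intros H Hf e He. destruct (Hf e He) as [N HN]. exists N. intros n Hn.
  rewrite <- (sum_eq f g n) by auto. auto.
Qed.

Lemma isum_ext2 f g a b :
  (forall x, f x = g x) -> a = b -> infinite_sum f a -> infinite_sum g b.
Proof. intros H <-; apply isum_ext; auto. Qed.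

Lemma isum_unique f a b : infinite_sum f a -> infinite_sum f b -> a = b.
Proof. apply UL_sequence. Qed.

Lemma isum_le f g a b :
  (forall x, f x <= g x) -> infinite_sum f a -> infinite_sum g b -> a <= b.
Proof. intros H Hf Hg. eapply Rle_cv_lim; [|apply Hf|apply Hg]. intros n. apply sum_Rle. auto. Qed.

Lemma isum_plus f g a b :
  infinite_sum f a -> infinite_sum g b -> infinite_sum (fun x => f x + g x) (a + b).
Proof.
  intros Hf Hg. pose proof (CV_plus _ _ _ _ Hf Hg) as H.
  intros e He. destruct (H e He) as [N HN]. exists N. intros n Hn.
  rewrite sum_plus. apply HN, Hn.
Qed.

Lemma isum_scal f a c : infinite_sum f a -> infinite_sum (fun x => c * f x) (c * a).
Proof.
  intros Hf. pose proof (CV_mult _ _ _ _ (Un_cv_const c) Hf) as H.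
  intros e He. destruct (H e He) as [N HN]. exists N. intros n Hn.
  rewrite (sum_eq _ (fun i => f i * c)) by (intros; ring).
  rewrite <- scal_sum. apply HN, Hn.
Qed.

Lemma isum_zero f : (forall x, f x = 0) -> infinite_sum f 0.
Proof.
  intros H e He. exists 0%nat. intros n _. unfold Rdist.
  rewrite (sum_eq f (fun _ => 0)) by auto. rewrite sum_cte.
  replace (0 * INR (S n) - 0) with 0 by ring. rewrite Rabs_R0. auto.
Qed.

Lemma isum_partial_le f s :
  (forall x, 0 <= f x) -> infinite_sum f s -> forall n, sum_f_R0 f n <= s.
Proof. intros H Hs n. apply growing_ineq; [|apply Hs]. intros m; simpl. specialize (H (S m)). lra. Qed.

Lemma isum_nonneg f s : (forall x, 0 <= f x) -> infinite_sum f s -> 0 <= s.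
Proof. intros H Hs. eapply Rle_trans; [|apply (isum_partial_le f s H Hs 0)]. simpl; auto. Qed.

Lemma isum_bounded f B :
  (forall x, 0 <= f x) -> (forall n, sum_f_R0 f n <= B) -> exists s, infinite_sum f s /\ s <= B.
Proof.
  intros H HB. destruct (growing_cv (fun n => sum_f_R0 f n)) as [s Hs].
  - intros m; simpl. specialize (H (S m)). lra.
  - exists B. intros x [n ->]. auto.
  - exists s. split; auto. eapply Rle_cv_lim; [|apply Hs|apply Un_cv_const]. auto.
Qed.

Lemma isum_dom f g b :
  (forall x, 0 <= f x <= g x) -> infinite_sum g b -> exists a, infinite_sum f a /\ 0 <= a <= b.
Proof.
  intros H Hg. destruct (isum_bounded f b) as [a [Ha Hab]].
  - intros x; apply H.
  - intros n. eapply Rle_trans; [|apply (isum_partial_le g b)]; auto.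
    + apply sum_Rle. intros; apply H.
    + intros x; pose proof (H x); lra.
  - exists a. repeat split; auto. eapply isum_nonneg; eauto. intros x; apply H.
Qed.

Lemma psum_eq f s : (forall x, 0 <= f x) -> infinite_sum f s -> psum f = s.
Proof.
  intros H Hs. unfold psum.
  replace (Rbar_sup _) with (Finite s); [reflexivity|].
  apply Rbar_le_antisym.
  - apply Rbar_le_eps_l. intros d Hd. destruct (Hs d Hd) as [N HN].
    specialize (HN N (le_n N)). unfold Rdist in HN. apply Rabs_def2 in HN.
    eapply Rbar_le_trans; [|apply sup_ub; exists N; reflexivity]. simpl. lra.
  - apply sup_least. intros x [N ->]. simpl. apply isum_partial_le; auto.
Qed.

(** Finite sums [f 0 + ... + f (m - 1)], indexed so that [m = 0] is empty. *)

Fixpoint fsum (f : nat -> R) (m : nat) : R :=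
  match m with O => 0 | S m => fsum f m + f m end.

Lemma fsum_ext f g m : (forall i, (i < m)%nat -> f i = g i) -> fsum f m = fsum g m.
Proof. induction m; simpl; intros; auto. rewrite IHm, H; auto. Qed.

Lemma fsum_le f g m : (forall i, (i < m)%nat -> f i <= g i) -> fsum f m <= fsum g m.
Proof.
  induction m; simpl; intros H; [lra|].
  pose proof (H m ltac:(lia)). pose proof (IHm ltac:(intros; apply H; lia)). lra.
Qed.

Lemma fsum_const c m : fsum (fun _ => c) m = INR m * c.
Proof. induction m; simpl fsum; [simpl; ring|]. rewrite IHm, S_INR. ring. Qed.

Lemma fsum_plus f g m : fsum (fun i => f i + g i) m = fsum f m + fsum g m.
Proof. induction m; simpl; [ring|]. rewrite IHm; ring. Qed.

Lemma fsum_scal f c m : fsum (fun i => c * f i) m = c * fsum f m.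
Proof. induction m; simpl; [ring|]. rewrite IHm; ring. Qed.

Lemma fsum_nonneg f m : (forall i, (i < m)%nat -> 0 <= f i) -> 0 <= fsum f m.
Proof. intros. rewrite <- (Rmult_0_r (INR m)), <- fsum_const. apply fsum_le; auto. Qed.

Lemma fsum_sum f N : sum_f_R0 f N = fsum f (S N).
Proof. induction N; simpl; [ring|]. simpl in IHN. rewrite IHN. ring. Qed.

Lemma isum_fsum (F : nat -> nat -> R) (s : nat -> R) m :
  (forall i, (i < m)%nat -> infinite_sum (F i) (s i)) ->
  infinite_sum (fun x => fsum (fun i => F i x) m) (fsum s m).
Proof.
  induction m; intros H; simpl.
  - apply isum_zero. auto.
  - apply isum_plus; auto.
Qed.

Lemma ind_T (A : Prop) : A -> ind A = 1.
Proof. intros; unfold ind; destruct excluded_middle_informative; tauto. Qed.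
Lemma ind_F (A : Prop) : ~ A -> ind A = 0.
Proof. intros; unfold ind; destruct excluded_middle_informative; tauto. Qed.
Lemma ind_01 A : 0 <= ind A <= 1.
Proof. unfold ind; destruct excluded_middle_informative; lra. Qed.

Lemma isum_point (a : nat) c : infinite_sum (fun x => ind (a = x) * c) c.
Proof.
  assert (Hbefore : forall m, (m < a)%nat -> sum_f_R0 (fun x => ind (a = x) * c) m = 0).
  { induction m; intros Hm; simpl; rewrite ind_F by lia; [ring|]. rewrite IHm by lia. ring. }
  assert (Hafter : forall n, (a <= n)%nat -> sum_f_R0 (fun x => ind (a = x) * c) n = c).
  { induction n; intros Hn; simpl.
    - rewrite ind_T by lia. ring.
    - destruct (Nat.eq_dec a (S n)) as [->|Hne].
      + rewrite Hbefore, ind_T by lia. ring.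
      + rewrite IHn, ind_F by lia. ring. }
  intros e He. exists a. intros n Hn. unfold Rdist. rewrite Hafter by auto.
  replace (c - c) with 0 by ring. rewrite Rabs_R0. auto.
Qed.

Lemma sum_swap (f : nat -> nat -> R) N M :
  sum_f_R0 (fun x => sum_f_R0 (fun y => f x y) M) N =
  sum_f_R0 (fun y => sum_f_R0 (fun x => f x y) N) M.
Proof. induction N; simpl; auto. rewrite IHN, <- sum_plus. auto. Qed.

Lemma cv_sum_fin (F : nat -> nat -> R) (l : nat -> R) M :
  (forall y, Un_cv (fun n => F n y) (l y)) ->
  Un_cv (fun n => sum_f_R0 (fun y => F n y) M) (sum_f_R0 l M).
Proof. induction M; intros H; simpl; auto. apply CV_plus; auto. Qed.

Lemma fubini (f : nat -> nat -> R) (a : nat -> R) (A : R) :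
  (forall x y, 0 <= f x y) -> (forall x, infinite_sum (f x) (a x)) -> infinite_sum a A ->
  exists b, (forall y, infinite_sum (fun x => f x y) (b y)) /\ infinite_sum b A.
Proof.
  intros Hf Ha HA.
  assert (Ha0 : forall x, 0 <= a x) by (intros; eapply isum_nonneg; [|apply Ha]; auto).
  assert (HaA : forall N, sum_f_R0 a N <= A) by (apply isum_partial_le; auto).
  assert (Hcol : forall y, exists s, infinite_sum (fun x => f x y) s /\ s <= A).
  { intros y. apply isum_bounded; auto. intros n. eapply Rle_trans; [|apply (HaA n)].
    apply sum_Rle. intros x _. eapply Rle_trans; [|apply (isum_partial_le _ _ (Hf x) (Ha x) y)].
    destruct y; simpl; [lra|]. pose proof (cond_pos_sum (f x) y (Hf x)). lra. }
  destruct (choice _ Hcol) as [b Hb].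
  assert (Hbcol : forall y, infinite_sum (fun x => f x y) (b y)) by apply Hb.
  clear Hcol; clear Hb.
  assert (Hb0 : forall y, 0 <= b y) by (intros y; apply (isum_nonneg (fun x => f x y)); [intros z; apply Hf|apply Hbcol]).
  assert (HbA : forall M, sum_f_R0 b M <= A).
  { intros M. eapply Rle_cv_lim with (Vn := fun _ => A);
      [|apply cv_sum_fin with (F := fun n y => sum_f_R0 (fun x => f x y) n); intros y; apply Hbcol
       |apply Un_cv_const].
    intros n. simpl. rewrite <- sum_swap. eapply Rle_trans; [|apply (HaA n)].
    apply sum_Rle. intros x _. apply isum_partial_le; auto. }
  destruct (isum_bounded b A Hb0 HbA) as [B [HB HBA]].
  exists b. split; [exact Hbcol|].
  replace A with B; auto. apply Rle_antisym; auto.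
  eapply Rle_cv_lim with (Vn := fun _ => B); [|apply HA|apply Un_cv_const].
  intros N. simpl.
  eapply Rle_cv_lim; [|apply cv_sum_fin with (F := fun m x => sum_f_R0 (f x) m); intros x; apply Ha
                       |apply Un_cv_const].
  intros M. simpl. rewrite sum_swap. eapply Rle_trans; [|apply (isum_partial_le b B Hb0 HB M)].
  apply sum_Rle. intros y _. apply isum_partial_le; auto.
Qed.

Lemma dist_average (A : nat -> Prop) p g :
  is_dist A p -> (forall x, A x -> 0 <= g x <= 1) ->
  exists s, infinite_sum (fun x => p x * g x) s /\ psum (fun x => p x * g x) = s /\ 0 <= s <= 1.
Proof.
  intros [Hp0 [Hout Hsum]] Hg.
  assert (Hb : forall x, 0 <= p x * g x <= p x).
  { intros x. pose proof (Hp0 x). destruct (classic (A x)) as [Hx|Hx].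
    - pose proof (Hg x Hx). split; nra.
    - rewrite (Hout x Hx). lra. }
  destruct (isum_dom _ _ 1 Hb Hsum) as [s [Hs Hs1]].
  exists s. repeat split; try apply Hs1; auto. apply psum_eq; auto. intros; apply Hb.
Qed.

Section ChannelMeasure.
Variable W : channel.

Lemma W_nonneg k x y : inX W k x -> 0 <= Wc W k x y.
Proof. intros H. apply (W_dist W k x H). Qed.
Lemma W_out k x y : inX W k x -> ~ inY W k y -> Wc W k x y = 0.
Proof. intros H Hy. apply (W_dist W k x H); auto. Qed.
Lemma W_sum k x : inX W k x -> infinite_sum (Wc W k x) 1.
Proof. intros H. apply (W_dist W k x H). Qed.

Lemma Wmeas_spec k x A : inX W k x ->
  infinite_sum (fun y => Wc W k x y * ind (A y)) (Wmeas W k x A) /\ 0 <= Wmeas W k x A <= 1.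
Proof.
  intros H. destruct (dist_average (inY W k) (Wc W k x) (fun y => ind (A y)) (W_dist W k x H))
    as [s [Hs [Hps Hs1]]]; [intros; apply ind_01|].
  unfold Wmeas. rewrite Hps. auto.
Qed.

Lemma Wmeas_sum k x A : inX W k x ->
  infinite_sum (fun y => Wc W k x y * ind (A y)) (Wmeas W k x A).
Proof. intros H. apply (Wmeas_spec k x A H). Qed.

Lemma Wmeas_bounds k x A : inX W k x -> 0 <= Wmeas W k x A <= 1.
Proof. intros H. apply (Wmeas_spec k x A H). Qed.

Lemma Wmeas_le_series k x A g s : inX W k x ->
  (forall y, Wc W k x y * ind (A y) <= g y) -> infinite_sum g s -> Wmeas W k x A <= s.
Proof. intros H Hg Hs. eapply isum_le; [apply Hg|apply Wmeas_sum; auto|auto]. Qed.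

Lemma Wmeas_ext k x (A B : nat -> Prop) : inX W k x ->
  (forall y, inY W k y -> (A y <-> B y)) -> Wmeas W k x A = Wmeas W k x B.
Proof.
  intros H HAB. apply isum_unique with (fun y => Wc W k x y * ind (A y)); [apply Wmeas_sum; auto|].
  eapply isum_ext; [|apply Wmeas_sum; eauto]. intros y.
  destruct (classic (inY W k y)) as [Hy|Hy]; [|rewrite !W_out; auto; ring].
  destruct (classic (A y)) as [Ha|Ha].
  - rewrite !ind_T; auto. apply HAB; auto.
  - rewrite !ind_F; auto. rewrite <- HAB; auto.
Qed.

Lemma Wmeas_mono k x (A B : nat -> Prop) : inX W k x ->
  (forall y, A y -> B y) -> Wmeas W k x A <= Wmeas W k x B.
Proof.
  intros H HAB. eapply Wmeas_le_series; [auto| |apply Wmeas_sum; auto]. intros y.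
  apply Rmult_le_compat_l; [apply W_nonneg; auto|].
  destruct (classic (A y)); [rewrite !ind_T; auto; lra|rewrite ind_F; auto; apply ind_01].
Qed.

Lemma Wmeas_compl k x A : inX W k x -> Wmeas W k x A + Wmeas W k x (fun y => ~ A y) = 1.
Proof.
  intros H. eapply isum_unique; [apply isum_plus; apply Wmeas_sum; auto|].
  eapply isum_ext; [|apply W_sum; eauto]. intros y.
  destruct (classic (A y)); [rewrite ind_T, ind_F|rewrite ind_F, ind_T]; auto; ring.
Qed.

Lemma Wmeas_full k x (A : nat -> Prop) : inX W k x ->
  (forall y, inY W k y -> A y) -> Wmeas W k x A = 1.
Proof.
  intros H HA. rewrite (Wmeas_ext k x A (fun _ => True)); auto; [|firstorder].
  eapply isum_unique; [apply Wmeas_sum; auto|].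
  eapply isum_ext; [|apply W_sum; eauto]. intros y. rewrite ind_T; auto; ring.
Qed.

Lemma Wmeas_sub k x (A B C : nat -> Prop) : inX W k x ->
  (forall y, inY W k y -> A y -> B y \/ C y) -> Wmeas W k x A <= Wmeas W k x B + Wmeas W k x C.
Proof.
  intros H HA. eapply Wmeas_le_series; [auto| |apply isum_plus; apply Wmeas_sum; auto]. intros y.
  pose proof (ind_01 (B y)). pose proof (ind_01 (C y)). pose proof (W_nonneg k x y H).
  destruct (classic (inY W k y)) as [Hy|Hy]; [|rewrite W_out; auto; lra].
  destruct (classic (A y)) as [Ha|Ha]; [|rewrite ind_F; auto; nra].
  rewrite ind_T; auto.
  destruct (HA y Hy Ha) as [Hb|Hc]; [rewrite (ind_T (B y))|rewrite (ind_T (C y))]; auto; nra.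
Qed.

Lemma ind_union (D : nat -> Prop) m :
  ind (exists i, (i < m)%nat /\ D i) <= fsum (fun i => ind (D i)) m.
Proof.
  induction m; simpl.
  - rewrite ind_F; [lra|]. intros [i [Hi _]]; lia.
  - assert (Hs : 0 <= fsum (fun i => ind (D i)) m) by (apply fsum_nonneg; intros; apply ind_01).
    pose proof (ind_01 (D m)). pose proof (ind_01 (exists i, (i < S m)%nat /\ D i)).
    destruct (classic (D m)) as [Hd|Hd]; [rewrite (ind_T (D m)); auto; lra|].
    destruct (classic (exists i, (i < m)%nat /\ D i)) as [[i [Hi Hdi]]|Hn].
    + rewrite (ind_T (exists i, (i < S m)%nat /\ D i)) by (exists i; split; auto; lia).
      rewrite (ind_T (exists i, (i < m)%nat /\ D i)) in IHm by eauto. lra.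
    + rewrite (ind_F (exists i, (i < S m)%nat /\ D i)); [lra|].
      intros [i [Hi Hdi]]. destruct (Nat.eq_dec i m) as [->|]; auto.
      apply Hn. exists i. split; auto. lia.
Qed.

Lemma Wmeas_union k x (D : nat -> nat -> Prop) m : inX W k x ->
  Wmeas W k x (fun y => exists i, (i < m)%nat /\ D i y) <= fsum (fun i => Wmeas W k x (D i)) m.
Proof.
  intros H. eapply Wmeas_le_series; [auto| |apply (isum_fsum (fun i y => Wc W k x y * ind (D i y)))].
  - intros y. cbv beta. rewrite fsum_scal. apply Rmult_le_compat_l; [apply W_nonneg; auto|].
    apply (ind_union (fun i => D i y)).
  - intros; apply Wmeas_sum; auto.
Qed.

(* The output distribution [W^n_{P^n}] is a distribution on [Y_n], obtained
   column-wise from the joint distribution [P^n(x) W^n(y|x)]. *)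
Lemma outP_spec (P : nat -> nat -> R) k : is_dist (inX W k) (P k) ->
  (forall y, infinite_sum (fun x => P k x * Wc W k x y) (outP W P k y)) /\
  is_dist (inY W k) (outP W P k).
Proof.
  intros [Hp0 [Hpout Hpsum]].
  assert (Hf : forall x y, 0 <= P k x * Wc W k x y).
  { intros x y. destruct (classic (inX W k x)) as [Hx|Hx].
    - apply Rmult_le_pos; [apply Hp0|apply W_nonneg; auto].
    - rewrite (Hpout x Hx); lra. }
  destruct (fubini (fun x y => P k x * Wc W k x y) (P k) 1 Hf) as [b [Hb1 Hb2]]; auto.
  { intros x. destruct (classic (inX W k x)) as [Hx|Hx].
    - apply (isum_ext2 (fun y => P k x * Wc W k x y) _ (P k x * 1)); [auto|ring|].
      apply isum_scal, W_sum, Hx.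
    - rewrite (Hpout x Hx). apply isum_zero. intros; ring. }
  assert (Ho : forall y, outP W P k y = b y) by (intros y; apply psum_eq; auto).
  repeat split.
  - intros y. rewrite Ho. auto.
  - intros y. rewrite Ho. eapply isum_nonneg; [|apply Hb1]. intros x; apply Hf.
  - intros y Hy. rewrite Ho. eapply isum_unique; [apply Hb1|]. apply isum_zero. intros x.
    destruct (classic (inX W k x)); [rewrite W_out|rewrite Hpout]; auto; ring.
  - eapply isum_ext; [|apply Hb2]. intros; rewrite Ho; auto.
Qed.

End ChannelMeasure.

Lemma average_Wmeas W (P : nat -> nat -> R) k (D : nat -> Prop) : is_dist (inX W k) (P k) ->
  exists s, infinite_sum (fun x => P k x * Wmeas W k x D) s /\
            infinite_sum (fun y => ind (D y) * outP W P k y) s.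
Proof.
  intros HP. pose proof HP as [Hp0 [Hpout Hpsum]].
  destruct (outP_spec W P k HP) as [Hcol _].
  assert (Hf : forall x y, 0 <= P k x * (Wc W k x y * ind (D y))).
  { intros x y. pose proof (ind_01 (D y)). destruct (classic (inX W k x)) as [Hx|Hx].
    - apply Rmult_le_pos; [apply Hp0|]. apply Rmult_le_pos; [apply W_nonneg; auto|lra].
    - rewrite (Hpout x Hx); lra. }
  destruct (dist_average _ (P k) (fun x => Wmeas W k x D) HP) as [A [HA _]].
  { intros x Hx. apply Wmeas_bounds, Hx. }
  destruct (fubini _ (fun x => P k x * Wmeas W k x D) A Hf) as [b [Hb HbA]]; auto.
  { intros x. destruct (classic (inX W k x)) as [Hx|Hx].
    - apply isum_scal, Wmeas_sum, Hx.
    - rewrite (Hpout x Hx), Rmult_0_l. apply isum_zero. intros; ring. }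
  exists A. split; auto. eapply isum_ext; [|apply HbA]. intros y.
  eapply isum_unique; [apply Hb|]. eapply isum_ext; [|apply isum_scal, Hcol].
  intros x. cbv beta. ring.
Qed.

Lemma bl_pos k : 0 < bl k.
Proof. unfold bl. apply lt_0_INR. lia. Qed.

Lemma exp_le_mono x y : x <= y -> exp x <= exp y.
Proof. intros [H|H]; [left; apply exp_increasing; auto|rewrite H; lra]. Qed.

Lemma dens_lt_iff k a b r : 0 < a -> 0 <= b ->
  (dens_lt k a b r <-> a < exp (bl k * r) * b).
Proof.
  intros Ha Hb. pose proof (bl_pos k) as Hn. unfold dens_lt.
  destruct (Rle_lt_dec b 0) as [Hb0|Hb0].
  { replace b with 0 by lra. split; [intros H; destruct (H Ha); lra|lra]. }
  assert (Hab : 0 < a / b) by (apply Rdiv_lt_0_compat; auto).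
  assert (Hscale : ln (a / b) / bl k < r <-> ln (a / b) < bl k * r).
  { split; intros H.
    - apply (Rmult_lt_compat_l (bl k)) in H; auto.
      replace (bl k * (ln (a / b) / bl k)) with (ln (a / b)) in H by (field; lra). exact H.
    - apply (Rmult_lt_reg_l (bl k)); auto.
      replace (bl k * (ln (a / b) / bl k)) with (ln (a / b)) by (field; lra). exact H. }
  assert (Hexp : ln (a / b) < bl k * r <-> a / b < exp (bl k * r)).
  { rewrite <- (exp_ln (a / b)) at 2 by auto.
    split; [apply exp_increasing|apply exp_lt_inv]. }
  assert (Hdiv : a / b < exp (bl k * r) <-> a < exp (bl k * r) * b).
  { split; intros H.
    - apply (Rmult_lt_compat_r b) in H; auto.
      replace (a / b * b) with a in H by (field; lra). exact H.
    - apply (Rmult_lt_reg_r b); auto.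
      replace (a / b * b) with a by (field; lra). exact H. }
  split.
  - intros H. apply Hdiv, Hexp, Hscale, (H Ha).
  - intros H _. split; auto. apply Hscale, Hexp, Hdiv, H.
Qed.

Lemma Jp_seq_bounds W P Q r k : is_dist (inX W k) (P k) -> 0 <= Jp_seq W P Q r k <= 1.
Proof.
  intros HP. unfold Jp_seq.
  destruct (dist_average _ (P k) (fun x => Wmeas W k x (fun y => dens_lt k (Wc W k x y) (Q k y) r)) HP)
    as [s [_ [-> Hs]]]; auto.
  intros; apply Wmeas_bounds; auto.
Qed.

Lemma Jp_seq_mono W P Q r r' k : is_dist (inX W k) (P k) -> r <= r' ->
  Jp_seq W P Q r k <= Jp_seq W P Q r' k.
Proof.
  intros HP Hr. unfold Jp_seq.
  destruct (dist_average _ (P k) (fun x => Wmeas W k x (fun y => dens_lt k (Wc W k x y) (Q k y) r)) HP)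
    as [s [Hs [-> _]]]; [intros; apply Wmeas_bounds; auto|].
  destruct (dist_average _ (P k) (fun x => Wmeas W k x (fun y => dens_lt k (Wc W k x y) (Q k y) r')) HP)
    as [s' [Hs' [-> _]]]; [intros; apply Wmeas_bounds; auto|].
  eapply isum_le; [|apply Hs|apply Hs']. intros x. destruct HP as [Hp0 [Hpout _]].
  destruct (classic (inX W k x)) as [Hx|Hx]; [|rewrite (Hpout x Hx); lra].
  apply Rmult_le_compat_l; auto. apply Wmeas_mono; auto.
  intros y Hd Ha. destruct (Hd Ha). split; auto. lra.
Qed.

Lemma Jp_profile W P Q : input_seq W P ->
  exists h : R -> R, (forall s, J_p W P Q s = Finite (h s)) /\ (forall s, 0 <= h s <= 1) /\
    (forall s t, s <= t -> h s <= h t).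
Proof.
  intros HP.
  assert (H : forall s, exists v, J_p W P Q s = Finite v /\ 0 <= v <= 1).
  { intros s. apply limsup_unit_interval. intros k; apply Jp_seq_bounds; auto. }
  destruct (choice _ H) as [h Hh]. exists h. split; [intros; apply Hh|]. split; [intros; apply Hh|].
  intros s t Hst. pose proof (limsup_le (Jp_seq W P Q s) (Jp_seq W P Q t)) as L.
  unfold J_p in Hh. rewrite (proj1 (Hh s)), (proj1 (Hh t)) in L. apply L.
  - intros; apply Jp_seq_bounds; auto.
  - intros d Hd. exists 0%nat. intros n _. pose proof (Jp_seq_mono W P Q s t n (HP n) Hst). lra.
Qed.

Section SpectrumLeftLimit.
Variables (W : channel) (P Q : nat -> nat -> R) (x : R).
Hypothesis HP : input_seq W P.

(* [Lim_left] is an actual left limit, since [J_p] is monotone and bounded. *)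
Lemma Jp_left_lim : is_left_lim (J_p W P Q) x (Lim_left (J_p W P Q) x).
Proof.
  unfold Lim_left. apply epsilon_spec. destruct (Jp_profile W P Q HP) as [h [Hh [Hb Hm]]].
  destruct (left_lim_monotone h x 1 Hm (fun s => proj2 (Hb s))) as [L HL].
  exists L. intros V HV. destruct (HL V HV) as [d [Hd Hg]].
  exists d; split; auto. intros g Hg'. rewrite Hh. auto.
Qed.

Lemma Lim_left_Jp_le c :
  (forall g, 0 < g -> Rbar_le (J_p W P Q (x - g)) c) -> Rbar_le (Lim_left (J_p W P Q) x) c.
Proof.
  destruct (Jp_profile W P Q HP) as [h [Hh _]].
  apply (left_lim_le _ h x _ Hh Jp_left_lim).
Qed.

Lemma Lim_left_Jp_ge c d0 : 0 < d0 ->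
  (forall g, 0 < g < d0 -> Rbar_le c (J_p W P Q (x - g))) -> Rbar_le c (Lim_left (J_p W P Q) x).
Proof.
  destruct (Jp_profile W P Q HP) as [h [Hh _]].
  apply (left_lim_ge _ h x _ Hh Jp_left_lim).
Qed.

Lemma Lim_left_Jp_spec : exists l, Lim_left (J_p W P Q) x = Finite l /\ 0 <= l <= 1 /\
  forall g, 0 < g -> Rbar_le (J_p W P Q (x - g)) (Finite l).
Proof.
  destruct (Jp_profile W P Q HP) as [h [Hh [Hb Hm]]].
  assert (H0 : Rbar_le (Finite 0) (Lim_left (J_p W P Q) x)).
  { apply (Lim_left_Jp_ge _ 1); [lra|]. intros g _. rewrite Hh. apply Hb. }
  assert (H1 : Rbar_le (Lim_left (J_p W P Q) x) (Finite 1)).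
  { apply Lim_left_Jp_le. intros g _. rewrite Hh. apply Hb. }
  destruct (Lim_left (J_p W P Q) x) as [l| |] eqn:El; simpl in H0, H1; try contradiction.
  exists l. repeat split; auto. intros g Hg. rewrite <- El.
  apply (Lim_left_Jp_ge _ g Hg). intros g' Hg'. rewrite !Hh. simpl. apply Hm. lra.
Qed.

End SpectrumLeftLimit.

Definition codeP {W k} (c : code W k) (x : nat) : R :=
  / INR (cN c) * fsum (fun i => ind (cphi c i = x)) (cN c).

Lemma cN_pos_R {W k} (c : code W k) : 0 < INR (cN c).
Proof. apply lt_0_INR. pose proof (cN_pos W k c). lia. Qed.

Lemma codeP_sum {W k} (c : code W k) (g : nat -> R) :
  infinite_sum (fun x => codeP c x * g x) (/ INR (cN c) * fsum (fun i => g (cphi c i)) (cN c)).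
Proof.
  eapply isum_ext; [|apply isum_scal, (isum_fsum (fun i x => ind (cphi c i = x) * g x))].
  - intros x. unfold codeP. cbv beta.
    rewrite (fsum_ext _ (fun i => g x * ind (cphi c i = x))), fsum_scal by (intros; ring).
    ring.
  - intros i _. eapply isum_ext; [|apply (isum_point (cphi c i) (g (cphi c i)))].
    intros x. destruct (classic (cphi c i = x)) as [->|Hne]; auto. rewrite ind_F; auto; ring.
Qed.

Lemma codeP_dist {W k} (c : code W k) : is_dist (inX W k) (codeP c).
Proof.
  pose proof (cN_pos_R c). repeat split.
  - intros x. apply Rmult_le_pos; [left; apply Rinv_0_lt_compat; auto|].
    apply fsum_nonneg. intros; apply ind_01.
  - intros x Hx. unfold codeP. rewrite (fsum_ext _ (fun _ => 0)); [rewrite fsum_const; ring|].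
    intros i Hi. apply ind_F. intros E. apply Hx. rewrite <- E. apply cphi_in; auto.
  - eapply isum_ext2; [| |apply (codeP_sum c (fun _ => 1))]; [intros; cbv beta; ring|].
    rewrite fsum_const. field. lra.
Qed.

Lemma codeP_input_seq W (Phi : forall k, code W k) : input_seq W (fun k => codeP (Phi k)).
Proof. intros k. apply codeP_dist. Qed.

Lemma Pe_fsum {W k} (c : code W k) :
  Pe W k c = / INR (cN c) * fsum (fun i => 1 - Wmeas W k (cphi c i) (cD c i)) (cN c).
Proof.
  unfold Pe. rewrite fsum_sum. pose proof (cN_pos W k c).
  replace (S (pred (cN c))) with (cN c) by lia. auto.
Qed.

Lemma Pe_bounds W k (c : code W k) : 0 <= Pe W k c <= 1.
Proof.
  rewrite Pe_fsum. pose proof (cN_pos_R c) as HN.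
  assert (Hi : forall i, (i < cN c)%nat -> 0 <= 1 - Wmeas W k (cphi c i) (cD c i) <= 1).
  { intros i Hi. pose proof (Wmeas_bounds W k (cphi c i) (cD c i) (cphi_in W k c i Hi)). lra. }
  assert (Hs0 : 0 <= fsum (fun i => 1 - Wmeas W k (cphi c i) (cD c i)) (cN c))
    by (apply fsum_nonneg; apply Hi).
  assert (Hs1 : fsum (fun i => 1 - Wmeas W k (cphi c i) (cD c i)) (cN c) <= INR (cN c) * 1)
    by (rewrite <- fsum_const; apply fsum_le; apply Hi).
  pose proof (Rinv_0_lt_compat _ HN). split; [nra|].
  apply Rle_trans with (/ INR (cN c) * INR (cN c)); [nra|]. right; field; lra.
Qed.

Lemma decoding_sets_disjoint {W k} (c : code W k) y :
  fsum (fun i => ind (cD c i y)) (cN c) <= 1.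
Proof.
  cut (forall m, (m <= cN c)%nat ->
         fsum (fun i => ind (cD c i y)) m = 0 \/
         (fsum (fun i => ind (cD c i y)) m = 1 /\ exists i, (i < m)%nat /\ cD c i y)).
  { intros H. destruct (H (cN c) (le_n _)) as [->|[-> _]]; lra. }
  induction m as [|m IHm]; intros Hm; [left; reflexivity|]. simpl.
  destruct (IHm ltac:(lia)) as [->|[-> [i [Hi Hyi]]]].
  - destruct (classic (cD c m y)) as [Hy|Hy].
    + right. rewrite ind_T; auto. split; [ring|]. exists m; split; auto.
    + left. rewrite ind_F; auto. ring.
  - right. rewrite ind_F; [split; [ring|exists i; split; auto]|].
    intro. apply (cD_disj W k c i m y); auto; lia.
Qed.

Lemma rate_exp_bound {W k} (c : code W k) r g : r + g <= rate W k c ->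
  exp (bl k * r) <= exp (- (bl k * g)) * INR (cN c).
Proof.
  intros Hrate. pose proof (cN_pos_R c) as HN. pose proof (bl_pos k) as Hn.
  rewrite <- (exp_ln (INR (cN c))), <- exp_plus by auto.
  unfold rate in Hrate. apply (Rmult_le_compat_r (bl k)) in Hrate; [|lra].
  replace (ln (INR (cN c)) / bl k * bl k) with (ln (INR (cN c))) in Hrate by (field; lra).
  apply exp_le_mono. nra.
Qed.

Section Converse.
Variables (W : channel) (k : nat) (Q : nat -> nat -> R) (r : R).
Hypothesis HQ : is_dist (inY W k) (Q k).

Let E x := fun y => dens_lt k (Wc W k x y) (Q k y) r.

(* On a decoding set [D], the event [E_x] has [W_x]-mass at most
   [e^{n r} Q(D)]; outside [D] it is bounded by the mass of the complement. *)
Lemma Wmeas_dens_split x (D : nat -> Prop) K QD : inX W k x ->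
  exp (bl k * r) <= K -> infinite_sum (fun y => Q k y * ind (D y)) QD ->
  Wmeas W k x (E x) <= Wmeas W k x (fun y => ~ D y) + K * QD.
Proof.
  intros Hx HK HQD.
  eapply Wmeas_le_series; [auto| |apply isum_plus; [apply Wmeas_sum; auto|apply isum_scal, HQD]].
  intros y. cbv beta. set (a := Wc W k x y). set (q := Q k y).
  assert (Ha : 0 <= a) by (apply W_nonneg; auto).
  assert (Hq : 0 <= q) by apply HQ.
  pose proof (ind_01 (E x y)). pose proof (exp_pos (bl k * r)).
  destruct (classic (D y)) as [HD|HD].
  - rewrite (ind_F (~ _)), (ind_T (D y)); auto.
    destruct (classic (E x y)) as [HE|HE]; [|rewrite ind_F; auto; nra].
    rewrite ind_T; auto. destruct (Rle_lt_dec a 0); [nra|].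
    apply (dens_lt_iff k a q r) in HE; auto. nra.
  - rewrite (ind_T (~ _)), (ind_F (D y)); auto. nra.
Qed.

Lemma Jp_seq_codeP (c : code W k) (P : nat -> nat -> R) : P k = codeP c ->
  Jp_seq W P Q r k = / INR (cN c) * fsum (fun i => Wmeas W k (cphi c i) (E (cphi c i))) (cN c).
Proof.
  intros HP. unfold Jp_seq. rewrite HP.
  apply psum_eq; [|exact (codeP_sum c (fun x => Wmeas W k x (E x)))].
  intros x. destruct (classic (inX W k x)) as [Hx|Hx].
  - apply Rmult_le_pos; [apply (codeP_dist c)|apply Wmeas_bounds; auto].
  - rewrite (proj1 (proj2 (codeP_dist c)) x Hx). lra.
Qed.

Lemma decoding_sets_mass (c : code W k) : exists QD : nat -> R,
  (forall i, infinite_sum (fun y => Q k y * ind (cD c i y)) (QD i) /\ 0 <= QD i) /\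
  fsum QD (cN c) <= 1.
Proof.
  assert (HQD : forall i, exists s, infinite_sum (fun y => Q k y * ind (cD c i y)) s /\ 0 <= s <= 1).
  { intros i. apply isum_dom with (g := Q k); [|apply HQ].
    intros y. pose proof (proj1 HQ y). pose proof (ind_01 (cD c i y)). split; nra. }
  destruct (choice _ HQD) as [QD HQD']. exists QD. split; [intros i; split; apply HQD'|].
  eapply isum_le; [|apply (isum_fsum (fun i y => Q k y * ind (cD c i y))); intros; apply HQD'
                   |apply HQ].
  intros y. cbv beta. rewrite fsum_scal. pose proof (proj1 HQ y).
  pose proof (decoding_sets_disjoint c y).
  assert (0 <= fsum (fun i => ind (cD c i y)) (cN c)) by (apply fsum_nonneg; intros; apply ind_01).
  nra.
Qed.

Lemma converse_bound (c : code W k) (P : nat -> nat -> R) g :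
  P k = codeP c -> 0 < g -> r + g <= rate W k c ->
  Jp_seq W P Q r k <= Pe W k c + exp (- (bl k * g)).
Proof.
  intros HP Hg Hrate. rewrite (Jp_seq_codeP c P HP), Pe_fsum.
  destruct (decoding_sets_mass c) as [QD [HQD HsumQ]].
  pose proof (cN_pos_R c) as HN.
  set (N := cN c) in *. set (K := exp (- (bl k * g)) * INR N).
  assert (Hi : forall i, (i < N)%nat ->
            Wmeas W k (cphi c i) (E (cphi c i)) <= (1 - Wmeas W k (cphi c i) (cD c i)) + K * QD i).
  { intros i Hi. assert (HX : inX W k (cphi c i)) by (apply cphi_in; auto).
    pose proof (Wmeas_compl W k (cphi c i) (cD c i) HX).
    pose proof (Wmeas_dens_split (cphi c i) (cD c i) K (QD i) HX (rate_exp_bound c r g Hrate)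
                  (proj1 (HQD i))). lra. }
  apply Rle_trans with (/ INR N * (fsum (fun i => 1 - Wmeas W k (cphi c i) (cD c i)) N + K * fsum QD N)).
  - apply Rmult_le_compat_l; [left; apply Rinv_0_lt_compat; auto|].
    rewrite <- fsum_scal, <- fsum_plus. apply fsum_le; auto.
  - rewrite Rmult_plus_distr_l. apply Rplus_le_compat_l. unfold K.
    replace (/ INR N * (exp (- (bl k * g)) * INR N * fsum QD N)) with (exp (- (bl k * g)) * fsum QD N)
      by (field; lra).
    pose proof (exp_pos (- (bl k * g))). assert (0 <= fsum QD N) by (apply fsum_nonneg; intros; apply HQD).
    nra.
Qed.

End Converse.

(** The code is built greedily: each
    new codeword [x] gets as decoding set the part of its "typical" set
    [B_x = {y | (1/n) log (W_x(y) / W_P(y)) >= r}] not yet used. *)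

Section Feinstein.
Variables (W : channel) (k : nat) (P : nat -> nat -> R) (r : R) (M : nat).
Hypothesis HP : is_dist (inX W k) (P k).
Hypothesis HM : (1 <= M)%nat.

Let th := exp (- (bl k * r)).
Let eps := Ip_seq W P r k + INR M * th.
Let B x y := inY W k y /\ ~ dens_lt k (Wc W k x y) (outP W P k y) r.

Lemma typical_mass : infinite_sum (fun x => P k x * Wmeas W k x (B x)) (1 - Ip_seq W P r k).
Proof.
  set (E x := fun y => dens_lt k (Wc W k x y) (outP W P k y) r).
  destruct (dist_average _ (P k) (fun x => Wmeas W k x (E x)) HP) as [s [Hs [Hps _]]].
  { intros; apply Wmeas_bounds; auto. }
  change (Ip_seq W P r k) with (psum (fun x => P k x * Wmeas W k x (E x))).
  rewrite Hps. destruct HP as [_ [Hpout Hpsum]].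
  eapply isum_ext2; [| |apply (isum_plus _ _ _ _ Hpsum (isum_scal _ _ (-1) Hs))]; [|ring].
  intros x. destruct (classic (inX W k x)) as [Hx|Hx]; [|rewrite (Hpout x Hx); ring].
  pose proof (Wmeas_compl W k x (E x) Hx) as Hc.
  rewrite (Wmeas_ext W k x (B x) (fun y => ~ E x y)); [|auto|intros y Hy; unfold B; tauto].
  replace (Wmeas W k x (fun y => ~ E x y)) with (1 - Wmeas W k x (E x)) by lra. ring.
Qed.

Lemma typical_output_mass x0 (D : nat -> Prop) : inX W k x0 -> (forall y, D y -> B x0 y) ->
  exists s, infinite_sum (fun x => P k x * Wmeas W k x D) s /\ s <= th.
Proof.
  intros Hx0 HD. destruct (average_Wmeas W P k D HP) as [s [Hs Hout]].
  exists s. split; auto.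
  destruct (outP_spec W P k HP) as [_ [Hq0 _]].
  apply Rle_trans with (th * Wmeas W k x0 D).
  - eapply isum_le; [|apply Hout|apply isum_scal, Wmeas_sum, Hx0].
    intros y. cbv beta. unfold th. pose proof (exp_pos (- (bl k * r))). pose proof (Hq0 y).
    pose proof (W_nonneg W k x0 y Hx0).
    destruct (classic (D y)) as [Hd|Hd]; [|rewrite ind_F; auto; nra].
    rewrite ind_T; auto. destruct (HD y Hd) as [_ Hn].
    set (a := Wc W k x0 y) in *. set (q := outP W P k y) in *.
    assert (Ha : 0 < a) by (apply NNPP; intro; apply Hn; intro; lra).
    assert (Hqa : exp (bl k * r) * q <= a) by (apply Rnot_lt_le; intro; apply Hn, dens_lt_iff; auto).
    assert (Hinv : exp (- (bl k * r)) * exp (bl k * r) = 1)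
      by (rewrite <- exp_plus; replace (- (bl k * r) + bl k * r) with 0 by ring; apply exp_0).
    nra.
  - pose proof (Wmeas_bounds W k x0 D Hx0). unfold th. pose proof (exp_pos (- (bl k * r))). nra.
Qed.

Definition greedy_code m (phi : nat -> nat) (D : nat -> nat -> Prop) : Prop :=
  (forall i, (i < m)%nat -> inX W k (phi i)) /\
  (forall i y, (i < m)%nat -> D i y -> B (phi i) y) /\
  (forall i j y, (i < m)%nat -> (j < m)%nat -> i <> j -> D i y -> D j y -> False) /\
  (forall i, (i < m)%nat -> 1 - eps <= Wmeas W k (phi i) (D i)).

(* While [m < M], some input has [W_x(B_x \ U) >= 1 - eps], where [U] is the
   union of the decoding sets chosen so far: otherwise averaging against [P]
   would give [1 - I_n(r) < (1 - eps) + m e^{-n r}], contradicting [m < M]. *)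
Lemma greedy_step m phi D : (m < M)%nat -> greedy_code m phi D ->
  exists x, inX W k x /\
    1 - eps <= Wmeas W k x (fun y => B x y /\ ~ exists i, (i < m)%nat /\ D i y).
Proof.
  intros Hm [H1 [H2 _]]. set (U := fun y => exists i, (i < m)%nat /\ D i y).
  apply NNPP. intro Hn.
  assert (Hlt : forall x, inX W k x -> Wmeas W k x (fun y => B x y /\ ~ U y) <= 1 - eps).
  { intros x Hx. apply Rnot_lt_le. intro. apply Hn. exists x. split; auto.
    change (1 - eps <= Wmeas W k x (fun y => B x y /\ ~ U y)). lra. }
  assert (Hs : forall i, exists s, (i < m)%nat ->
            infinite_sum (fun x => P k x * Wmeas W k x (D i)) s /\ s <= th).
  { intros i. destruct (Nat.lt_ge_cases i m) as [Hi|Hi].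
    - destruct (typical_output_mass (phi i) (D i)) as [s Hs]; eauto.
    - exists 0; intros; lia. }
  destruct (choice _ Hs) as [s Hs'].
  pose proof HP as [Hp0 [Hpout Hpsum]].
  assert (HS : infinite_sum (fun x => (1 - eps) * P k x + fsum (fun i => P k x * Wmeas W k x (D i)) m)
                 ((1 - eps) * 1 + fsum s m)).
  { apply isum_plus; [apply isum_scal, Hpsum|].
    apply (isum_fsum (fun i x => P k x * Wmeas W k x (D i))). intros i Hi; apply Hs'; auto. }
  assert (Hle : 1 - Ip_seq W P r k <= (1 - eps) * 1 + fsum s m).
  { eapply isum_le; [|apply typical_mass|apply HS].
    intros x. cbv beta. destruct (classic (inX W k x)) as [Hx|Hx].
    - rewrite fsum_scal, (Rmult_comm (1 - eps)), <- Rmult_plus_distr_l.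
      apply Rmult_le_compat_l; auto.
      pose proof (Wmeas_sub W k x (B x) (fun y => B x y /\ ~ U y) U Hx) as Hsub.
      pose proof (Hlt x Hx). pose proof (Wmeas_union W k x D m Hx) as Hunion. fold U in Hunion.
      assert (Wmeas W k x (B x) <= Wmeas W k x (fun y => B x y /\ ~ U y) + Wmeas W k x U)
        by (apply Hsub; intros y _ Hb; destruct (classic (U y)); tauto).
      lra.
    - rewrite (Hpout x Hx), (fsum_ext _ (fun _ => 0)); [rewrite fsum_const; lra|].
      intros; ring. }
  assert (fsum s m <= INR m * th) by (rewrite <- fsum_const; apply fsum_le; intros i Hi; apply Hs'; auto).
  assert (INR m < INR M) by (apply lt_INR; lia).
  assert (0 < th) by apply exp_pos.
  unfold eps in Hle. nra.
Qed.

Lemma greedy_construction m : (m <= M)%nat -> exists phi D, greedy_code m phi D.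
Proof.
  induction m as [|m IHm]; intros Hm.
  - exists (fun _ => 0%nat), (fun _ _ => False). repeat split; intros; lia.
  - destruct IHm as [phi [D HC]]; [lia|].
    destruct (greedy_step m phi D ltac:(lia) HC) as [x [Hx Hxw]].
    set (U := fun y => exists i, (i < m)%nat /\ D i y) in Hxw.
    destruct HC as [H1 [H2 [H3 H4]]].
    exists (fun i => if Nat.eqb i m then x else phi i),
           (fun i y => if Nat.eqb i m then (B x y /\ ~ U y) else D i y).
    split; [|split; [|split]].
    + intros i Hi. destruct (Nat.eqb_spec i m); auto. apply H1; lia.
    + intros i y Hi. destruct (Nat.eqb_spec i m); [tauto|]. apply H2; lia.
    + intros i j y Hi Hj Hij. destruct (Nat.eqb_spec i m), (Nat.eqb_spec j m); try lia.
      * intros [_ Hu] Hd. apply Hu. exists j; split; auto; lia.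
      * intros Hd [_ Hu]. apply Hu. exists i; split; auto; lia.
      * apply H3; lia.
    + intros i Hi. destruct (Nat.eqb_spec i m); auto. apply H4; lia.
Qed.

Lemma feinstein_code : exists c : code W k, cN c = M /\ Pe W k c <= eps.
Proof.
  destruct (greedy_construction M (le_n M)) as [phi [D [H1 [H2 [H3 H4]]]]].
  assert (Hsub : forall i y, (i < M)%nat -> D i y -> inY W k y) by (intros i y Hi Hd; apply (H2 i y Hi Hd)).
  exists (Build_code W k M phi D HM H1 Hsub H3). split; auto.
  rewrite Pe_fsum. simpl.
  apply Rle_trans with (/ INR M * fsum (fun _ => eps) M).
  - apply Rmult_le_compat_l; [left; apply Rinv_0_lt_compat, lt_0_INR; lia|].
    apply fsum_le. intros i Hi. pose proof (H4 i Hi). lra.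
  - rewrite fsum_const. right. field. apply not_0_INR. lia.
Qed.

End Feinstein.

Lemma Ip_is_Jp W P : I_p W P = J_p W P (outP W P).
Proof. reflexivity. Qed.

Lemma exp_decay g d : 0 < g -> 0 < d -> eventually (fun n => exp (- (bl n * g)) <= d).
Proof.
  intros Hg Hd. destruct (archimed (- ln d / g)) as [H1 _].
  exists (Z.to_nat (up (- ln d / g))). intros n Hn.
  assert (Hlt : - ln d / g < bl n).
  { unfold bl. apply Rlt_le_trans with (IZR (up (- ln d / g))); auto.
    destruct (Z_le_gt_dec 0 (up (- ln d / g))).
    - rewrite <- (Z2Nat.id (up (- ln d / g))), <- INR_IZR_INZ by auto. apply le_INR. lia.
    - apply Rle_trans with 0; [apply IZR_le; lia|apply pos_INR]. }
  assert (- ln d < bl n * g).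
  { replace (- ln d) with (- ln d / g * g) by (field; lra). apply Rmult_lt_compat_r; auto. }
  left. rewrite <- (exp_ln d); auto. apply exp_increasing. lra.
Qed.

(* Feinstein's lemma at rate [r - 2g]: taking between [e^{n (r - 2g)}] and
   [2 e^{n (r - 2g)}] codewords and threshold [r - g] gives error
   [<= I_n(r - g) + 2 e^{- n g}]. *)
Lemma feinstein_rate W k P r g : is_dist (inX W k) (P k) -> 0 < g -> 0 <= r - 2 * g ->
  exists c : code W k, r - 2 * g <= rate W k c /\
    Pe W k c <= Ip_seq W P (r - g) k + 2 * exp (- (bl k * g)).
Proof.
  intros HP Hg Hr.
  set (n := bl k). assert (Hn : 0 < n) by apply bl_pos.
  set (a := r - 2 * g). set (z := up (exp (n * a))).
  destruct (archimed (exp (n * a))) as [Hz1 Hz2]. fold z in Hz1, Hz2.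
  assert (He1 : 1 <= exp (n * a)) by (rewrite <- exp_0; apply exp_le_mono; unfold a; nra).
  assert (Hz0 : (0 <= z)%Z) by (apply le_IZR; lra).
  set (M := Z.to_nat z).
  assert (HMz : INR M = IZR z) by (unfold M; rewrite INR_IZR_INZ, Z2Nat.id; auto).
  assert (HM : (1 <= M)%nat) by (assert (INR 0 < INR M) by (simpl; lra); apply INR_lt in H; lia).
  destruct (feinstein_code W k P (r - g) M HP HM) as [c [HcN Hc]].
  exists c. split.
  - unfold rate. rewrite HcN. fold n.
    assert (n * a < ln (INR M))
      by (rewrite <- (ln_exp (n * a)); apply ln_increasing; [apply exp_pos|lra]).
    apply (Rmult_le_reg_r n); auto.
    replace (ln (INR M) / n * n) with (ln (INR M)) by (field; lra). fold a. lra.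
  - eapply Rle_trans; [apply Hc|]. apply Rplus_le_compat_l. fold n.
    assert (INR M <= 2 * exp (n * a)) by lra.
    assert (exp (n * a) * exp (- (n * (r - g))) = exp (- (n * g)))
      by (rewrite <- exp_plus; f_equal; unfold a; ring).
    pose proof (exp_pos (- (n * (r - g)))). nra.
Qed.

Lemma trivial_code W k : exists c : code W k, rate W k c = 0 /\ Pe W k c = 0.
Proof.
  destruct (X_nonempty W k) as [x0 Hx0].
  assert (Hdisj : forall i j y, (i < 1)%nat -> (j < 1)%nat -> i <> j ->
                    inY W k y -> inY W k y -> False) by (intros; lia).
  exists (Build_code W k 1 (fun _ => x0) (fun _ y => inY W k y) (le_n 1)
            (fun _ _ => Hx0) (fun _ _ _ Hy => Hy) Hdisj).
  split.
  - unfold rate; simpl. rewrite ln_1. unfold Rdiv; ring.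
  - unfold Pe; simpl. rewrite Wmeas_full; auto. field.
Qed.

Lemma codes_choice W (Good : forall k, code W k -> Prop) :
  (forall k, exists c, Good k c) -> exists Phi : forall k, code W k, forall k, Good k (Phi k).
Proof.
  intros H. exists (fun k => proj1_sig (constructive_indefinite_description _ (H k))).
  intros k. apply (proj2_sig (constructive_indefinite_description _ (H k))).
Qed.

Fixpoint diag_index (Nf : nat -> nat) (n : nat) : nat :=
  match n with
  | O => O
  | S n' => if Nat.leb (Nf (S (diag_index Nf n'))) (S n')
            then S (diag_index Nf n') else diag_index Nf n'
  end.

Lemma diag_index_mono Nf n m : (n <= m)%nat -> (diag_index Nf n <= diag_index Nf m)%nat.
Proof.
  induction 1 as [|m _ IH]; auto. simpl. destruct (Nat.leb _ _); lia.
Qed.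

Lemma diag_index_valid Nf n : (1 <= diag_index Nf n)%nat -> (Nf (diag_index Nf n) <= n)%nat.
Proof.
  induction n as [|n IHn]; simpl; intros H; [lia|].
  destruct (Nat.leb_spec (Nf (S (diag_index Nf n))) (S n)); auto.
Qed.

Lemma diag_index_unbounded Nf J : eventually (fun n => (J <= diag_index Nf n)%nat).
Proof.
  induction J as [|J [n0 Hn0]]; [exists 0%nat; intros; lia|].
  set (m := max n0 (Nf (S J))).
  assert (Hm : (S J <= diag_index Nf (S m))%nat).
  { pose proof (Hn0 m ltac:(unfold m; lia)).
    destruct (Nat.eq_dec (diag_index Nf m) J) as [E|E].
    - simpl. rewrite E. destruct (Nat.leb_spec (Nf (S J)) (S m)); [lia|]. unfold m in *. lia.
    - simpl. destruct (Nat.leb _ _); lia. }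
  exists (S m). intros n Hn. pose proof (diag_index_mono Nf _ _ Hn). lia.
Qed.

Lemma diagonal_selection (A : nat -> nat -> Prop) :
  (forall j, eventually (A j)) ->
  exists jn : nat -> nat, (forall J, eventually (fun n => (J <= jn n)%nat)) /\
                          (forall n, (1 <= jn n)%nat -> A (jn n) n).
Proof.
  intros H. destruct (choice _ H) as [Nf HNf].
  exists (diag_index Nf). split; [apply diag_index_unbounded|].
  intros n Hn. apply HNf, diag_index_valid, Hn.
Qed.

Section CodingTheorems.
Variable W : channel.

Lemma Cp_le_of_codes r l (Phi : forall k, code W k) :
  (forall d, 0 < d -> eventually (fun n => r - d <= rate W n (Phi n))) ->
  (forall d, 0 < d -> eventually (fun n => Pe W n (Phi n) <= l + d)) ->
  Rbar_le (C_p W r) (Finite l).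
Proof.
  intros Hrate HPe. eapply Rbar_le_trans; [apply inf_lb; exists Phi; split; [|reflexivity]|].
  - apply eventually_liminf_ge, Hrate.
  - apply eventually_limsup_le, HPe.
Qed.

Lemma Ceps_ge_of_codes eps a (Phi : forall k, code W k) :
  (forall n, a <= rate W n (Phi n)) -> Rbar_le (limsup (fun k => Pe W k (Phi k))) (Finite eps) ->
  Rbar_le (Finite a) (C_eps W eps).
Proof.
  intros Hrate HPe. eapply Rbar_le_trans; [|apply sup_ub; exists Phi; split; [exact HPe|reflexivity]].
  apply eventually_liminf_ge. intros d Hd. exists 0%nat. intros n _. pose proof (Hrate n). lra.
Qed.

(* The threshold gaps [gam j = r / (2 (j + 1))] used in the diagonal argument. *)
Lemma small_gap r d : 0 < r -> 0 < d ->
  exists J, (1 <= J)%nat /\ forall j, (J <= j)%nat -> r / (2 * (INR j + 1)) <= d / 2.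
Proof.
  intros Hr Hd. destruct (archimed (r / d)) as [H1 _].
  exists (S (Z.to_nat (up (r / d)))). split; [lia|]. intros j Hj.
  assert (Hrd : r / d < INR j + 1).
  { apply le_INR in Hj. rewrite S_INR in Hj. destruct (Z_le_gt_dec 0 (up (r / d))).
    - rewrite INR_IZR_INZ, Z2Nat.id in Hj; auto. lra.
    - assert (r / d <= 0) by (apply Rle_trans with (IZR (up (r / d))); [lra|apply IZR_le; lia]).
      pose proof (pos_INR j). lra. }
  pose proof (pos_INR j).
  apply (Rmult_le_reg_r (2 * (INR j + 1))); [lra|].
  replace (r / (2 * (INR j + 1)) * (2 * (INR j + 1))) with r by (field; lra).
  apply (Rmult_lt_compat_r d) in Hrd; auto.
  replace (r / d * d) with r in Hrd by (field; lra). nra.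
Qed.

(* For a
   positive rate, Feinstein codes with gaps [gam (j n)] shrinking along a
   diagonal sequence [j n -> oo] achieve the left limit. *)
Lemma Cp_achievability P r : input_seq W P -> Rbar_le (C_p W r) (Lim_left (I_p W P) r).
Proof.
  intros HP. rewrite Ip_is_Jp.
  destruct (Lim_left_Jp_spec W P (outP W P) r HP) as [l [-> [Hl Hleft]]].
  destruct (Rle_lt_dec r 0) as [Hr|Hr].
  { destruct (codes_choice W (fun k c => rate W k c = 0 /\ Pe W k c = 0) (trivial_code W)) as [Phi HPhi].
    apply (Cp_le_of_codes r l Phi); intros d Hd; exists 0%nat; intros n _;
      rewrite ?(proj1 (HPhi n)), ?(proj2 (HPhi n)); lra. }
  set (gam := fun j : nat => r / (2 * (INR j + 1))).
  assert (Hgam : forall j, 0 < gam j /\ 0 <= r - 2 * gam j).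
  { intros j. unfold gam. pose proof (pos_INR j). split; [apply Rdiv_lt_0_compat; lra|].
    assert (r / (2 * (INR j + 1)) <= r / 2)
      by (unfold Rdiv; apply Rmult_le_compat_l; [lra|apply Rinv_le_contravar; lra]).
    lra. }
  destruct (diagonal_selection (fun j n =>
      Ip_seq W P (r - gam j) n + 2 * exp (- (bl n * gam j)) <= l + 2 * gam j)) as [jn [Hjn Hsel]].
  { intros j. destruct (Hgam j) as [Hg1 Hg2].
    assert (HIj : Rbar_le (J_p W P (outP W P) (r - gam j)) (Finite l)) by (apply Hleft, Hg1).
    destruct (eventually_and _ _ (limsup_le_eventually _ _ HIj (gam j) Hg1)
                (exp_decay (gam j) (gam j / 2) Hg1 ltac:(lra))) as [N HN].
    exists N. intros n Hn. destruct (HN n Hn).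
    change (Ip_seq W P (r - gam j) n) with (Jp_seq W P (outP W P) (r - gam j) n). lra. }
  destruct (codes_choice W (fun n c => r - 2 * gam (jn n) <= rate W n c /\
       Pe W n c <= Ip_seq W P (r - gam (jn n)) n + 2 * exp (- (bl n * gam (jn n)))))
    as [Phi HPhi].
  { intros n. apply feinstein_rate; [apply HP|apply Hgam|apply Hgam]. }
  assert (Hsmall : forall d, 0 < d ->
            eventually (fun n => (1 <= jn n)%nat /\ gam (jn n) <= d / 2)).
  { intros d Hd. destruct (small_gap r d Hr Hd) as [J [HJ1 HJ]].
    destruct (Hjn J) as [N HN]. exists N. intros n Hn. pose proof (HN n Hn).
    split; [lia|apply HJ; auto]. }
  apply (Cp_le_of_codes r l Phi); intros d Hd; destruct (Hsmall d Hd) as [N HN];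
    exists N; intros n Hn; destruct (HN n Hn) as [H1 H2]; destruct (HPhi n).
  - lra.
  - pose proof (Hsel n H1). lra.
Qed.

Lemma Ceps_achievability P eps : input_seq W P -> 0 <= eps ->
  Rbar_le (I_eps W P eps) (C_eps W eps).
Proof.
  intros HP Heps. apply sup_least. intros v [r [-> Hr]].
  destruct (Rle_lt_dec r 0) as [Hr0|Hr0].
  { destruct (codes_choice W (fun k c => rate W k c = 0 /\ Pe W k c = 0) (trivial_code W)) as [Phi HPhi].
    apply (Ceps_ge_of_codes eps r Phi); [intros n; rewrite (proj1 (HPhi n)); lra|].
    apply eventually_limsup_le. intros d Hd. exists 0%nat. intros n _. rewrite (proj2 (HPhi n)). lra. }
  apply Rbar_le_eps_l. intros d Hd.
  set (g := Rmin d r / 2).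
  assert (Hg : 0 < g) by (unfold g; apply Rmin_case; lra).
  assert (Hg2 : 2 * g <= d /\ 2 * g <= r)
    by (unfold g; split; [pose proof (Rmin_l d r)|pose proof (Rmin_r d r)]; lra).
  destruct (codes_choice W (fun n c => r - 2 * g <= rate W n c /\
       Pe W n c <= Ip_seq W P (r - g) n + 2 * exp (- (bl n * g)))) as [Phi HPhi].
  { intros n. apply feinstein_rate; auto. lra. }
  eapply Rbar_le_trans; [|apply (Ceps_ge_of_codes eps (r - 2 * g) Phi); [apply HPhi|]]; [simpl; lra|].
  eapply Rbar_le_trans; [|apply Hr]. rewrite Ip_is_Jp.
  apply limsup_le; [intros; apply Jp_seq_bounds; auto|].
  intros d' Hd'. destruct (exp_decay g (d' / 2) Hg ltac:(lra)) as [N HN]. exists N. intros n Hn.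
  pose proof (HN n Hn). destruct (HPhi n) as [_ HPe].
  pose proof (Jp_seq_mono W P (outP W P) (r - g) r n (HP n) ltac:(lra)).
  change (Ip_seq W P (r - g) n) with (Jp_seq W P (outP W P) (r - g) n) in HPe. lra.
Qed.

Lemma converse_limsup (Phi : forall k, code W k) Q r g :
  output_seq W Q -> 0 < g -> eventually (fun n => r + g <= rate W n (Phi n)) ->
  Rbar_le (J_p W (fun k => codeP (Phi k)) Q r) (limsup (fun k => Pe W k (Phi k))).
Proof.
  intros HQ Hg Hr. apply limsup_le; [intros; apply Pe_bounds|].
  intros d Hd. destruct (eventually_and _ _ Hr (exp_decay g d Hg Hd)) as [N HN].
  exists N. intros n Hn. destruct (HN n Hn) as [H1 H2].
  pose proof (converse_bound W n Q r (HQ n) (Phi n) (fun k => codeP (Phi k)) g eq_refl Hg H1). lra.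
Qed.

Lemma Cp_converse (Phi : forall k, code W k) r Q :
  Rbar_le (Finite r) (liminf (fun k => rate W k (Phi k))) -> output_seq W Q ->
  Rbar_le (Lim_left (J_p W (fun k => codeP (Phi k)) Q) r) (limsup (fun k => Pe W k (Phi k))).
Proof.
  intros Hr HQ. apply Lim_left_Jp_le; [apply codeP_input_seq|].
  intros g Hg. apply converse_limsup with (g := g / 2); auto; [lra|].
  destruct (liminf_ge_eventually _ _ Hr (g / 2) ltac:(lra)) as [N HN].
  exists N. intros n Hn. pose proof (HN n Hn). lra.
Qed.

Lemma Ceps_converse (Phi : forall k, code W k) eps Q :
  Rbar_le (limsup (fun k => Pe W k (Phi k))) (Finite eps) -> output_seq W Q ->
  Rbar_le (liminf (fun k => rate W k (Phi k))) (J_eps W (fun k => codeP (Phi k)) Q eps).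
Proof.
  intros HPe HQ. apply Rbar_le_below. intros r Hn.
  destruct (Rbar_lt_witness r _ Hn) as [r' [Hrr' Hr']].
  apply sup_ub. exists r. split; auto.
  eapply Rbar_le_trans; [|apply HPe]. apply converse_limsup with (g := (r' - r) / 2); auto; [lra|].
  destruct (liminf_ge_eventually _ _ Hr' ((r' - r) / 2) ltac:(lra)) as [N HN].
  exists N. intros n Hn'. pose proof (HN n Hn'). lra.
Qed.

End CodingTheorems.

Lemma outP_output_seq W P : input_seq W P -> output_seq W (outP W P).
Proof. intros HP k. apply (outP_spec W P k (HP k)). Qed.

Lemma Rbar_le_cycle a b c : Rbar_le a b -> Rbar_le b c -> Rbar_le c a -> a = b /\ a = c.
Proof.
  intros Hab Hbc Hca. split; apply Rbar_le_antisym; eauto using Rbar_le_trans.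
Qed.

Theorem theorem3 (W : channel) :
  (forall r : R,
     C_p W r =
       Rbar_inf (fun v => exists P, input_seq W P /\
                   v = Lim_left (fun s => I_p W P s) r) /\
     C_p W r =
       Rbar_inf (fun v => exists P, input_seq W P /\
                   v = Rbar_sup (fun u => exists Q, output_seq W Q /\
                          u = Lim_left (fun s => J_p W P Q s) r))) /\
  (forall eps : R, 0 <= eps < 1 ->
     C_eps W eps =
       Rbar_sup (fun v => exists P, input_seq W P /\ v = I_eps W P eps) /\
     C_eps W eps =
       Rbar_sup (fun v => exists P, input_seq W P /\
                   v = Rbar_inf (fun u => exists Q, output_seq W Q /\
                          u = J_eps W P Q eps))).
Proof.
  split.
  - intros r. apply Rbar_le_cycle.
    +
      apply inf_greatest. intros v [P [HP ->]]. apply Cp_achievability, HP.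
    + (* [Q = W_P] is one of the output distributions *)
      apply inf_greatest. intros v [P [HP ->]].
      eapply Rbar_le_trans; [apply inf_lb; exists P; split; [exact HP|reflexivity]|].
      apply sup_ub. exists (outP W P). split; [apply outP_output_seq, HP|reflexivity].
    + (* converse, with the codeword distribution of any admissible code sequence *)
      apply inf_greatest. intros v [Phi [Hrate ->]].
      eapply Rbar_le_trans; [apply inf_lb; exists (fun k => codeP (Phi k));
                             split; [apply codeP_input_seq|reflexivity]|].
      apply sup_least. intros u [Q [HQ ->]]. apply Cp_converse; auto.
  - intros eps [Heps _]. apply and_comm, Rbar_le_cycle.
    +
      apply sup_least. intros v [Phi [HPe ->]].
      eapply Rbar_le_trans; [|apply sup_ub; exists (fun k => codeP (Phi k));
                             split; [apply codeP_input_seq|reflexivity]].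
      apply inf_greatest. intros u [Q [HQ ->]]. apply Ceps_converse; auto.
    + (* [Q = W_P] is one of the output distributions *)
      apply sup_least. intros v [P [HP ->]].
      eapply Rbar_le_trans; [|apply sup_ub; exists P; split; [exact HP|reflexivity]].
      apply inf_lb. exists (outP W P). split; [apply outP_output_seq, HP|reflexivity].
    +
      apply sup_least. intros v [P [HP ->]]. apply Ceps_achievability; auto.
Qed.
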